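(* Let $A\in N_C$ be a concept name and $E,F,G$ regular role expressions, and let $\Sigma_R\subseteq N_R$ be the (finite) set of role names occurring in $E$, $F$, $G$. Writing $\Sigma_R$ also for the regular role expression that is the union of its elements (with $\Sigma_R^*$ its Kleene star), we have: (1) $\forall E.A\sqcap\forall F.\bot\sqsubseteq\forall G.A$ holds if and only if $\mathcal L(G)\subseteq\mathcal L(E+F\Sigma_R^* )$; (2) $\forall F.\bot\sqsubseteq\forall G.\bot$ holds if and only if $\mathcal L(G)\subseteq\mathcal L(F\Sigma_R^* )$. Here a subsumption $X\sqsubseteq Y$ ''holds'' means $X^{\mathcal I}\subseteq Y^{\mathcal I}$ for every interpretation $\mathcal I$.
   Context: Let $N_C$ and $N_R$ be disjoint countably infinite sets of concept names and role names. Regular role expressions are generated by $E ::= \emptyset \mid \varepsilon \mid r \mid (E+E) \mid (EE) \mid E^{*}$ with $r\in N_R$, with languages $\mathcal L(E)\subseteq N_R^*$ defined as usual (the union of an empty set of role names is the expression $\emptyset$). $\mathcal{FL}_{\bot\mathit{reg}}$ concept descriptions are generated by $C ::= A \mid \top \mid \bot \mid (C\sqcap C) \mid \forall E.C$ with $A\in N_C$. An interpretation $\mathcal I=(\Delta^{\mathcal I},\cdot^{\mathcal I})$ has nonempty domain, $A^{\mathcal I}\subseteq\Delta^{\mathcal I}$, $r^{\mathcal I}\subseteq(\Delta^{\mathcal I})^2$; $E^{\mathcal I}$ is the union over words $r_1\cdots r_n\in\mathcal L(E)$ of $r_1^{\mathcal I}\circ\cdots\circ r_n^{\mathcal I}$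 (identity for the empty word); $\top^{\mathcal I}=\Delta^{\mathcal I}$, $\bot^{\mathcal I}=\emptyset$, $(C\sqcap D)^{\mathcal I}=C^{\mathcal I}\cap D^{\mathcal I}$, $(\forall E.C)^{\mathcal I}=\{x\mid y\in C^{\mathcal I}$ for all $y$ with $(x,y)\in E^{\mathcal I}\}$. *)

From Stdlib Require Import List.
Import ListNotations.

(* Concept names N_C and role names N_R: two disjoint countably infinite
   sets, modelled as two distinct copies of nat. *)
Inductive cname : Type := CN (n : nat).
Inductive rname : Type := RN (n : nat).

Inductive rexp : Type :=
| REmpty : rexp
| REps : rexp
| RRole : rname -> rexp
| RPlus : rexp -> rexp -> rexp
| RCat : rexp -> rexp -> rexp
| RStar : rexp -> rexp.

Fixpoint lang (E : rexp) (w : list rname) : Prop :=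
  match E with
  | REmpty => False
  | REps => w = []
  | RRole r => w = [r]
  | RPlus E1 E2 => lang E1 w \/ lang E2 w
  | RCat E1 E2 => exists u v, w = u ++ v /\ lang E1 u /\ lang E2 v
  | RStar E1 => exists ws : list (list rname), w = concat ws /\ Forall (lang E1) ws
  end.

Inductive concept : Type :=
| CAtom : cname -> concept
| CTop : concept
| CBot : concept
| CAnd : concept -> concept -> concept
| CAll : rexp -> concept -> concept.

Record interp : Type := {
  dom : Type;
  dom_inhabited : inhabited dom;
  iconc : cname -> dom -> Prop;
  irole : rname -> dom -> dom -> Prop
}.

Fixpoint word_rel (I : interp) (w : list rname) (x y : dom I) : Prop :=
  match w with
  | [] => x = y
  | r :: w' => exists z, irole I r x z /\ word_rel I w' z y
  end.

Definition rexp_rel (I : interp) (E : rexp) (x y : dom I) : Prop :=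
  exists w, lang E w /\ word_rel I w x y.

Fixpoint cext (I : interp) (C : concept) (x : dom I) : Prop :=
  match C with
  | CAtom A => iconc I A x
  | CTop => True
  | CBot => False
  | CAnd C1 C2 => cext I C1 x /\ cext I C2 x
  | CAll E C1 => forall y, rexp_rel I E x y -> cext I C1 y
  end.

Definition subsumes (C D : concept) : Prop :=
  forall (I : interp) (x : dom I), cext I C x -> cext I D x.

Definition lang_incl (E F : rexp) : Prop :=
  forall w, lang E w -> lang F w.

Fixpoint roles (E : rexp) : list rname :=
  match E with
  | REmpty | REps => []
  | RRole r => [r]
  | RPlus E1 E2 | RCat E1 E2 => roles E1 ++ roles E2
  | RStar E1 => roles E1
  end.

Definition union_roles (l : list rname) : rexp :=
  fold_right (fun r acc => RPlus (RRole r) acc) REmpty l.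

(* Soundness: a G-path that is not an E-path starts, by hypothesis, with an
   F-path, which [forall F. bot] forbids.  Completeness: for a word w of L(G),
   either some prefix of w lies in L(F), and then w lies in L(F Sigma_R^* ),
   since all its letters occur in G; or none does, and the interpretation
   whose edges spell out the prefixes of w, with A interpreted as L(E), makes
   the empty word an instance of [forall E.A /\ forall F.bot] that has w as a
   G-successor, so that w must lie in L(E) (resp. such an instance cannot
   exist). *)

From Stdlib Require Import List Classical.
Import ListNotations.

Lemma lang_roles (G : rexp) (w : list rname) : lang G w -> incl w (roles G).
Proof.
  revert w; induction G as [| |r|G1 IH1 G2 IH2|G1 IH1 G2 IH2|G1 IH1];
    simpl; intros w Hw.
  - contradiction.
  - subst; apply incl_nil_l.
  - subst; apply incl_refl.
  - destruct Hw as [Hw|Hw]; [apply incl_appl | apply incl_appr]; auto.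
  - destruct Hw as (u & v & -> & Hu & Hv). apply incl_app.
    + apply incl_appl; auto.
    + apply incl_appr; auto.
  - destruct Hw as (ws & -> & Hws). intros r Hr.
    apply in_concat in Hr as (u & Hu & Hru).
    rewrite Forall_forall in Hws. exact (IH1 u (Hws u Hu) r Hru).
Qed.

Lemma lang_union_roles (l : list rname) (r : rname) :
  In r l -> lang (union_roles l) [r].
Proof.
  induction l as [|r' l IH]; simpl; intros Hr; [contradiction|].
  destruct Hr as [<-|Hr]; [left | right; apply IH]; auto.
Qed.

Lemma lang_star_union_roles (l : list rname) (v : list rname) :
  incl v l -> lang (RStar (union_roles l)) v.
Proof.
  intros Hv. exists (map (fun r => [r]) v). split.
  - clear Hv; induction v as [|r v IH]; simpl; [reflexivity | now rewrite <- IH].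
  - apply Forall_forall. intros u Hu.
    apply in_map_iff in Hu as (r & <- & Hr). now apply lang_union_roles, Hv.
Qed.

Definition prefix (u w : list rname) : Prop := exists s, w = u ++ s.

Lemma prefix_app_l (u v w : list rname) : prefix (u ++ v) w -> prefix u w.
Proof. intros (s & ->). exists (v ++ s). now rewrite app_assoc. Qed.

Lemma lang_cat_star_or_no_prefix (F G : rexp) (l : list rname) (w : list rname) :
  incl (roles G) l -> lang G w ->
  lang (RCat F (RStar (union_roles l))) w \/ (forall u, prefix u w -> ~ lang F u).
Proof.
  intros HGl Hw.
  destruct (classic (exists u, prefix u w /\ lang F u)) as [(u & (v & ->) & Hu)|Hno].
  - left. exists u, v. repeat split; auto.
    apply lang_star_union_roles. intros r Hr.
    apply HGl, (lang_roles G _ Hw), in_or_app; auto.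
  - right. intros u Hu HFu. eauto.
Qed.

Lemma word_rel_app_inv (I : interp) (u v : list rname) (x y : dom I) :
  word_rel I (u ++ v) x y -> exists z, word_rel I u x z /\ word_rel I v z y.
Proof.
  revert x; induction u as [|r u IH]; simpl; intros x Hxy.
  - exists x; auto.
  - destruct Hxy as (z & Hr & Hzy). destruct (IH z Hzy) as (z' & Hu & Hv).
    exists z'; split; [exists z|]; auto.
Qed.

Lemma cext_all_incl (I : interp) (G H : rexp) (C : concept) (x : dom I) :
  lang_incl G H -> cext I (CAll H C) x -> cext I (CAll G C) x.
Proof. intros HGH HC y (w & Hw & Hxy). apply HC. exists w; auto. Qed.

Lemma cext_all_plus (I : interp) (E F : rexp) (C : concept) (x : dom I) :
  cext I (CAll E C) x -> cext I (CAll F C) x -> cext I (CAll (RPlus E F) C) x.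
Proof.
  intros HE HF y (w & [Hw|Hw] & Hxy); [apply HE | apply HF]; exists w; auto.
Qed.

Lemma cext_all_cat_bot (I : interp) (F H : rexp) (C : concept) (x : dom I) :
  cext I (CAll F CBot) x -> cext I (CAll (RCat F H) C) x.
Proof.
  intros HF y (w & (u & v & -> & Hu & _) & Hxy).
  destruct (word_rel_app_inv I u v x y Hxy) as (z & Hxz & _).
  destruct (HF z); exists u; auto.
Qed.

(* The domain is all words, but only the prefixes of [w] are reachable from
   the empty word. *)
Definition prefix_interp (w : list rname) (P : list rname -> Prop) : interp :=
  {| dom := list rname;
     dom_inhabited := inhabits [];
     iconc := fun _ p => P p;
     irole := fun r p q => q = p ++ [r] /\ prefix q w |}.

Lemma word_rel_prefix_interp (w : list rname) (P : list rname -> Prop)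
    (u p q : list rname) :
  prefix p w -> word_rel (prefix_interp w P) u p q <-> q = p ++ u /\ prefix q w.
Proof.
  revert p; induction u as [|r u IH]; simpl; intros p Hp.
  - rewrite app_nil_r. split; [intros <-|intros [-> _]]; auto.
  - split.
    + intros (z & (-> & Hz) & Hzq). apply IH in Hzq as [-> Hq]; auto.
      split; [now rewrite <- app_assoc | exact Hq].
    + intros [-> Hq]. replace (p ++ r :: u) with ((p ++ [r]) ++ u) in *
        by now rewrite <- app_assoc.
      assert (Hpr : prefix (p ++ [r]) w) by exact (prefix_app_l _ _ _ Hq).
      exists (p ++ [r]). split; [split; [reflexivity | exact Hpr] | now apply IH].
Qed.

Lemma rexp_rel_prefix_interp (w : list rname) (P : list rname -> Prop)
    (H : rexp) (q : list rname) :
  rexp_rel (prefix_interp w P) H [] q <-> lang H q /\ prefix q w.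
Proof.
  assert (Hnil : prefix [] w) by (exists w; reflexivity).
  split.
  - intros (u & Hu & Hq). apply word_rel_prefix_interp in Hq as [-> Hq]; auto.
  - intros [Hq Hqw]. exists q. split; [auto|].
    now apply word_rel_prefix_interp.
Qed.

Lemma prefix_interp_all_bot (w : list rname) (P : list rname -> Prop) (F : rexp) :
  (forall u, prefix u w -> ~ lang F u) ->
  cext (prefix_interp w P) (CAll F CBot) [].
Proof.
  intros Hno y Hy. apply rexp_rel_prefix_interp in Hy as [HFy Hyw].
  exact (Hno y Hyw HFy).
Qed.

Lemma prefix_interp_reach (w : list rname) (P : list rname -> Prop) (G : rexp) :
  lang G w -> rexp_rel (prefix_interp w P) G [] w.
Proof.
  intros Hw. apply rexp_rel_prefix_interp. split; [auto|].
  exists []; now rewrite app_nil_r.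
Qed.

Theorem lemma2 (A : cname) (E F G : rexp) :
  let SigmaR := union_roles (roles E ++ roles F ++ roles G) in
  (subsumes (CAnd (CAll E (CAtom A)) (CAll F CBot)) (CAll G (CAtom A))
     <-> lang_incl G (RPlus E (RCat F (RStar SigmaR))))
  /\
  (subsumes (CAll F CBot) (CAll G CBot)
     <-> lang_incl G (RCat F (RStar SigmaR))).
Proof.
  intros SigmaR.
  assert (HG : incl (roles G) (roles E ++ roles F ++ roles G))
    by (do 2 apply incl_appr; apply incl_refl).
  split; split.
  - intros Hsub w Hw.
    destruct (lang_cat_star_or_no_prefix F G _ w HG Hw) as [HFS|Hno];
      [right; exact HFS | left].
    apply (Hsub (prefix_interp w (lang E)) []);
      [split | now apply prefix_interp_reach].
    + intros y Hy. now apply rexp_rel_prefix_interp in Hy as [HEy _].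
    + now apply prefix_interp_all_bot.
  - intros Hincl I x [HE HF]. apply (cext_all_incl I _ _ _ _ Hincl).
    apply cext_all_plus; [exact HE | now apply cext_all_cat_bot].
  - intros Hsub w Hw.
    destruct (lang_cat_star_or_no_prefix F G _ w HG Hw) as [HFS|Hno]; [exact HFS|].
    destruct (Hsub (prefix_interp w (lang E)) [] (prefix_interp_all_bot _ _ _ Hno) w).
    now apply prefix_interp_reach.
  - intros Hincl I x HF. apply (cext_all_incl I _ _ _ _ Hincl).
    now apply cext_all_cat_bot.
Qed.
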